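(* Let $d\in\mathbb Z^+$ and define $\mathbb P_{\boldsymbol 0}:=1$, $\mathbb P_{\boldsymbol m}:=\frac{(|\boldsymbol m|+d)!}{\boldsymbol m!\,d!}+\sum_{\boldsymbol w\le\boldsymbol m,\,\boldsymbol w\ne\boldsymbol m}\mathbb P_{\boldsymbol w}(|\boldsymbol m|-|\boldsymbol w|+1)!$ for $\boldsymbol m\in\mathscr F\setminus\{\boldsymbol 0\}$. Let $\tau_0:=1$, $\tau_k:=\sum_{j=0}^{k-1}(k-j+1)\tau_j$ for $k\ge1$. Then $$\mathbb P_{\boldsymbol m}\le\frac{2\,\tau_{|\boldsymbol m|}\,(|\boldsymbol m|+d-1)!}{(d-1)!}\qquad\text{for all }\boldsymbol m\in\mathscr F\setminus\{\boldsymbol 0\}.$$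
   Context: $\mathscr F$ is the set of finitely supported multi-indices in $\mathbb N_0^{\mathbb N}$; $|\boldsymbol m|=\sum m_j$, $\boldsymbol m!=\prod m_j!$, componentwise order. *)

From mathcomp Require Import all_boot all_order all_algebra.
Set Implicit Arguments. Unset Strict Implicit. Unset Printing Implicit Defensive.
Import Order.TTheory GRing.Theory Num.Theory.

(* A finitely supported multi-index m in N_0^N is represented by a finite
   sequence [m_0; ...; m_(n-1)] (all later entries are 0).  Trailing zeros
   do not affect any of the quantities below. *)
Definition mabs (m : seq nat) : nat := \sum_(i <- m) i.
Definition mfact (m : seq nat) : nat := \prod_(i <- m) i`!.
Definition mzero (m : seq nat) : bool := all (fun i => i == 0) m.

Fixpoint below (m : seq nat) : seq (seq nat) :=
  match m with
  | [::] => [:: [::]]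
  | a :: m' => [seq i :: w | i <- iota 0 a.+1, w <- below m']
  end.

(* P_m via recursion on |m| (fuel = |m| suffices, since w < m => |w| < |m|) *)
Fixpoint Paux (d : nat) (fuel : nat) (m : seq nat) {struct fuel} : rat :=
  if mzero m then 1%R else
  match fuel with
  | 0 => 1%R
  | f.+1 =>
      (((mabs m + d)`!)%:R / ((mfact m * d`!)%:R) +
       \sum_(w <- below m | w != m) Paux d f w * ((mabs m - mabs w).+1`!)%:R)%R
  end.

Definition PP (d : nat) (m : seq nat) : rat := Paux d (mabs m) m.

Fixpoint taus (n : nat) : seq nat :=
  match n with
  | 0 => [:: 1]
  | n'.+1 => let s := taus n' in
             rcons s (\sum_(j < n'.+1) (n'.+1 - j + 1) * nth 0 s j)
  end.
Definition tau (k : nat) : nat := nth 0 (taus k) k.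

(* Write d = d'+1 and G k := (k+d')!/d'!.  We prove by induction on the fuel of
   the recursive definition that P_m <= B |m|, where B 0 = 1 and
   B k = 2 tau_k G k for k > 0; for m <> 0 this is the theorem.
   In the recursion for P_m with |m| = n, the leading term together with the
   term w = 0 is at most 2 (n+1) tau_0 G n, and the terms with |w| = j >= 1
   contribute at most 2 (n-j+1) tau_j G n; by the tau recursion these add up
   to 2 tau_n G n. *)

From mathcomp Require Import all_boot all_order all_algebra.
From mathcomp Require Import ring zify.
Import Order.TTheory GRing.Theory Num.Theory.

Set Implicit Arguments.
Unset Strict Implicit.

Lemma mabs_cons (a : nat) (m : seq nat) : mabs (a :: m) = a + mabs m.
Proof. by rewrite /mabs big_cons. Qed.

Lemma mzeroE (m : seq nat) : mzero m = (mabs m == 0).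
Proof.
elim: m => [|a m IH]; first by rewrite /mabs big_nil.
by rewrite mabs_cons addn_eq0 -IH.
Qed.

Lemma mabs_below (m w : seq nat) : w \in below m ->
  mabs w <= mabs m /\ (mabs w = mabs m -> w = m).
Proof.
elim: m w => [|a m IH] w; first by rewrite /= inE => /eqP ->.
case/allpairsPdep => [i [w' [+ w'_below ->]]]; rewrite mem_iota => /andP [_ lt_ia].
have [le_w'm eq_w'm] := IH _ w'_below.
rewrite !mabs_cons; split; first by lia.
by move=> E; rewrite eq_w'm; [congr (_ :: _)|]; lia.
Qed.

Lemma mabs_below_lt (m w : seq nat) : w \in below m -> w != m -> mabs w < mabs m.
Proof.
move=> /mabs_below [le_wm eq_wm] ne_wm; rewrite ltn_neqAle le_wm andbT.
by apply: contra ne_wm => /eqP /eq_wm ->.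
Qed.

Lemma size_taus (n : nat) : size (taus n) = n.+1.
Proof. by elim: n => [|n IH] //=; rewrite size_rcons IH. Qed.

Lemma nth_taus (k j : nat) : j <= k -> nth 0 (taus k) j = tau j.
Proof.
elim: k j => [|k IH] j le_jk; first by case: j le_jk.
move: le_jk; rewrite leq_eqVlt => /orP [/eqP ->|lt_jk] //.
by rewrite /= nth_rcons size_taus lt_jk IH.
Qed.

Lemma tauS (n : nat) : tau n.+1 = \sum_(j < n.+1) (n.+1 - j + 1) * tau j.
Proof.
rewrite /tau /= nth_rcons size_taus ltnn eqxx.
by apply: eq_bigr => j _; rewrite nth_taus // -ltnS.
Qed.

Lemma fact_shift_mono (k n d : nat) : k <= n -> n`! * (k + d)`! <= (n + d)`! * k`!.
Proof.
elim: n => [|n IH]; first by rewrite leqn0 => /eqP ->; rewrite mulnC.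
rewrite leq_eqVlt => /orP [/eqP ->|lt_kn]; first by rewrite mulnC.
rewrite factS addSn factS -!mulnA leq_mul //; first by lia.
exact: IH.
Qed.

Lemma bin_fact_shift_le (n j d : nat) : j <= n ->
  'C(n, j) * (j + d)`! * (n - j).+1`! <= (n - j + 1) * (n + d)`!.
Proof.
move=> le_jn; rewrite -(leq_pmul2r (fact_gt0 j)).
have -> : 'C(n, j) * (j + d)`! * (n - j).+1`! * j`!
    = (n - j + 1) * ('C(n, j) * (j`! * (n - j)`!) * (j + d)`!).
  by rewrite factS; ring.
by rewrite bin_fact // -!mulnA leq_mul2l fact_shift_mono ?orbT.
Qed.

Lemma mfact_gt0 (m : seq nat) : 0 < mfact m.
Proof.
by rewrite /mfact; elim: m => [|a m IH]; rewrite ?big_nil ?big_cons ?muln_gt0 ?fact_gt0.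
Qed.

Local Open Scope ring_scope.

Lemma ler_nat_frac (a b c e : nat) : (0 < b)%N -> (0 < e)%N -> (a * e <= c * b)%N ->
  a%:R / b%:R <= c%:R / e%:R :> rat.
Proof.
move=> b_gt0 e_gt0 le_ac.
by rewrite ler_pdivrMr ?ltr0n // mulrAC ler_pdivlMr ?ltr0n // -!natrM ler_nat.
Qed.

Section BinomialTransform.
Context {R : numDomainType}.

Definition binT (n : nat) (h : nat -> R) : R := \sum_(k < n.+1) 'C(n, k)%:R * h k.

Lemma binT_S (n : nat) (h : nat -> R) :
  binT n.+1 h = binT n h + binT n (fun k => h k.+1).
Proof.
rewrite /binT big_ord_recl /=.
under eq_bigr => i _ do rewrite /bump /= binS natrD mulrDl.
rewrite big_split /= addrA; congr (_ + _).
rewrite [RHS]big_ord_recl big_ord_recr /= !bin0 bin_small // mul0r addr0.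
by congr (_ + _); apply: eq_bigr.
Qed.

Lemma binT_ge0 (n : nat) (h : nat -> R) : (forall k, 0 <= h k) -> 0 <= binT n h.
Proof. by move=> h_ge0; apply: sumr_ge0 => i _; rewrite mulr_ge0 ?ler0n. Qed.

Lemma binT_mono (n a : nat) (h : nat -> R) :
  (forall k, 0 <= h k) -> binT n h <= binT (n + a) h.
Proof.
move=> h_ge0; elim: a => [|a IH]; first by rewrite addn0.
by rewrite addnS binT_S (le_trans IH) // lerDl binT_ge0.
Qed.

Lemma binT_shift (a n : nat) (h : nat -> R) : (forall k, 0 <= h k) ->
  \sum_(i < a.+1) binT n (fun k => h (i + k)%N) <= binT (n + a) h.
Proof.
elim: a h => [|a IH] h h_ge0; first by rewrite big_ord1 addn0.
rewrite big_ord_recl addnS binT_S lerD ?binT_mono //.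
exact: IH (fun k => h k.+1) (fun k => h_ge0 _).
Qed.

(* Counting multi-indices below m by order: at most C(|m|, k) of them have
   order k, which is all that is used of the weighted sum below. *)
Lemma sum_below_le (m : seq nat) (h : nat -> R) : (forall k, 0 <= h k) ->
  \sum_(w <- below m) h (mabs w) <= binT (mabs m) h.
Proof.
elim: m h => [|a m IH] h h_ge0.
  by rewrite /= big_seq1 /mabs big_nil /binT big_ord1 bin0 mul1r.
rewrite big_allpairs_dep mabs_cons addnC (le_trans _ (binT_shift _ _ h_ge0)) //.
rewrite -(subn0 a.+1) -/(index_iota 0 a.+1) big_mkord; apply: ler_sum => i _.
under eq_bigr => w _ do rewrite mabs_cons.
exact: IH.
Qed.

End BinomialTransform.

Section Bound.
Variable d' : nat.

Definition shift_fact (k : nat) : rat := ((k + d')`!)%:R / (d'`!)%:R.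

Definition Pbound (k : nat) : rat := if k == 0%N then 1 else 2 * (tau k)%:R * shift_fact k.

Lemma Pbound_ge0 (k : nat) : 0 <= Pbound k.
Proof.
by rewrite /Pbound /shift_fact; case: ifP => _; rewrite ?ler01 ?mulr_ge0 ?invr_ge0 ?ler0n.
Qed.

Lemma head_terms_le (m : seq nat) (n : nat) : mabs m = n ->
  ((n + d'.+1)`!)%:R / ((mfact m * d'.+1`!)%:R) + (n.+1`!)%:R
  <= 2 * (n + 1)%:R * shift_fact n.
Proof.
move=> <-{n}; set n := mabs m.
have -> : 2 * (n + 1)%:R * shift_fact n =
    ((n + 1) * (n + d')`!)%:R / (d'`!)%:R + ((n + 1) * (n + d')`!)%:R / (d'`!)%:R.
  by rewrite /shift_fact !natrM; ring.
apply: lerD.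
  apply: ler_nat_frac; rewrite ?muln_gt0 ?mfact_gt0 ?fact_gt0 //.
  by have := mfact_gt0 m; rewrite addnS !factS; nia.
rewrite -[X in X <= _]divr1 -[1 in X in X <= _]/(0`!)%:R.
apply: ler_nat_frac; rewrite ?fact_gt0 //.
by have := fact_shift_mono d' (leq0n n); rewrite add0n factS fact0; nia.
Qed.

Lemma tail_term_le (n j : nat) : (0 < j <= n)%N ->
  'C(n, j)%:R * (Pbound j * ((n - j).+1`!)%:R)
  <= 2 * ((n - j + 1) * tau j)%:R * shift_fact n.
Proof.
case: j => // j /= le_jn.
have -> : 'C(n, j.+1)%:R * (Pbound j.+1 * ((n - j.+1).+1`!)%:R)
    = (2 * tau j.+1 * ('C(n, j.+1) * (j.+1 + d')`! * (n - j.+1).+1`!))%:R / (d'`!)%:R.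
  by rewrite /Pbound /shift_fact /= !natrM; ring.
have -> : 2 * ((n - j.+1 + 1) * tau j.+1)%:R * shift_fact n
    = (2 * tau j.+1 * ((n - j.+1 + 1) * (n + d')`!))%:R / (d'`!)%:R.
  by rewrite /shift_fact !natrM; ring.
apply: ler_nat_frac; rewrite ?fact_gt0 // leq_mul2r leq_mul2l.
by rewrite bin_fact_shift_le ?orbT.
Qed.

(* One step of the induction: the recursion for P_m, with every P_w replaced by
   its bound and the count of the w of order k replaced by C(|m|, k), stays
   below the bound for |m|. *)
Lemma Pbound_step (m : seq nat) (n : nat) : mabs m = n.+1 ->
  ((n.+1 + d'.+1)`!)%:R / ((mfact m * d'.+1`!)%:R) +
  \sum_(k < n.+1) 'C(n.+1, k)%:R * (Pbound k * ((n.+1 - k).+1`!)%:R)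
  <= Pbound n.+1.
Proof.
move=> Hm; rewrite {2}/Pbound /= tauS natr_sum mulr_sumr mulr_suml !big_ord_recl.
rewrite addrA lerD //.
  by have := head_terms_le Hm; rewrite bin0 mul1r /Pbound /= mul1r subn0 muln1.
by apply: ler_sum => i _; apply: tail_term_le; rewrite /= /bump /= add1n ltnS ltnW.
Qed.

Lemma Paux_le_Pbound (f : nat) (m : seq nat) :
  (mabs m <= f)%N -> Paux d'.+1 f m <= Pbound (mabs m).
Proof.
elim: f m => [|f IH] m le_mf.
  by move: le_mf; rewrite leqn0 /= mzeroE => /eqP ->; rewrite /Pbound.
rewrite /= mzeroE; case: posnP => [->|m_gt0]; first by rewrite /Pbound.
have [n Hm] : exists n, mabs m = n.+1 by exists (mabs m).-1; rewrite prednK.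
rewrite Hm; apply: le_trans (Pbound_step Hm); rewrite lerD2l.
pose h k := if (k < n.+1)%N then Pbound k * ((n.+1 - k).+1`!)%:R else 0.
have h_ge0 k : 0 <= h k.
  by rewrite /h; case: ifP => _; rewrite ?mulr_ge0 ?Pbound_ge0 ?ler0n.
have le_strict : \sum_(w <- below m | w != m) Paux d'.+1 f w * ((n.+1 - mabs w).+1`!)%:R
    <= \sum_(w <- below m | w != m) h (mabs w).
  rewrite big_seq_cond [X in _ <= X]big_seq_cond; apply: ler_sum => w /andP [w_below ne_wm].
  have lt_wm := mabs_below_lt w_below ne_wm; rewrite Hm in lt_wm.
  by rewrite /h lt_wm ler_wpM2r ?ler0n // IH //; rewrite Hm in le_mf; lia.
have le_all : \sum_(w <- below m | w != m) h (mabs w) <= \sum_(w <- below m) h (mabs w).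
  by rewrite [X in _ <= X](bigID (fun w => w != m)) /= lerDl sumr_ge0.
have eq_binT : binT n.+1 h
    = \sum_(k < n.+1) 'C(n.+1, k)%:R * (Pbound k * ((n.+1 - k).+1`!)%:R).
  rewrite /binT big_ord_recr /= {2}/h ltnn mulr0 addr0.
  by apply: eq_bigr => k _; rewrite /h ltn_ord.
rewrite -eq_binT (le_trans le_strict) // (le_trans le_all) // -Hm.
exact: sum_below_le.
Qed.

End Bound.

Theorem lemmaA7 (d : nat) (hd : (0 < d)%N) (m : seq nat) (hm : ~~ mzero m) :
  PP d m <= (2 * tau (mabs m) * (mabs m + d - 1)`!)%:R / ((d - 1)`!)%:R.
Proof.
case: d hd => [//|d'] _.
have := Paux_le_Pbound d' (leqnn (mabs m)).
rewrite /Pbound; move: hm; rewrite mzeroE => /negbTE ->.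
by rewrite /PP /shift_fact !subn1 addnS /= !natrM mulrA.
Qed.
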